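(* Let $M\models\mathrm{AA}$ and let $\phi(x,\bar y)$ be an affine formula. Then for each tuple $\bar b$ in $M$ there is a unique $a\in M$ such that $\phi^M(a,\bar b)=\sup_x\phi^M(x,\bar b)$ and $\phi^M(t,\bar b)<\phi^M(a,\bar b)$ for all $t<a$. Moreover, the map $\bar b\mapsto a$ is definable.
   Context: Structures are complete metric spaces of diameter at most $1$ in the language $L=\{+,\cdot,\wedge,\vee,0,1\}$ (operations $1$-Lipschitz, $d$ the only relation symbol). Affine formulas are built from $1$ and atomic formulas $d(t_1,t_2)$ using $+$, scalar multiplication by reals, $\sup_x$, $\inf_x$; $\phi^M$ denotes the real-valued interpretation. $\mathrm{AA}$ is the set of all closed affine conditions $\phi\le\psi$ true in every model of first-order Peano arithmetic (formulated in $L$, with $\le$ given by $x\wedge y=x$, lattice operations min/max, and discrete metric). $x\le y$ means $x\wedge y=x$, $t<a$ means $t\le a$ and $t\ne a$. A function $f:M^m\to M$ is definable if the predicate $(\bar x,y)\mapsto d(f(\bar x),y)$ is a uniform limit on $M^{m+1}$ of interpretations of affine formulas with parameters from $M$. *)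

From HB Require Import structures.
From mathcomp Require Import all_boot all_order all_algebra.
From mathcomp Require Import boolp classical_sets reals.
Set Implicit Arguments. Unset Strict Implicit. Unset Printing Implicit Defensive.
Import Order.TTheory GRing.Theory Num.Theory.
Local Open Scope ring_scope.
Local Open Scope classical_set_scope.

Record Lops (T : Type) := MkLops {
  op_add : T -> T -> T;
  op_mul : T -> T -> T;
  op_meet : T -> T -> T;
  op_join : T -> T -> T;
  op_zero : T;
  op_one : T }.

Inductive term :=
| TVar of nat
| TZero | TOne
| TAdd of term & term
| TMul of term & term
| TMeet of term & term
| TJoin of term & term.

Fixpoint tev (T : Type) (o : Lops T) (v : nat -> T) (t : term) : T :=
  match t with
  | TVar n => v n
  | TZero => op_zero o
  | TOne => op_one o
  | TAdd a b => op_add o (tev o v a) (tev o v b)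
  | TMul a b => op_mul o (tev o v a) (tev o v b)
  | TMeet a b => op_meet o (tev o v a) (tev o v b)
  | TJoin a b => op_join o (tev o v a) (tev o v b)
  end.

Fixpoint tfv (t : term) : seq nat :=
  match t with
  | TVar n => [:: n]
  | TZero | TOne => [::]
  | TAdd a b | TMul a b | TMeet a b | TJoin a b => tfv a ++ tfv b
  end.

Definition upd (T : Type) (v : nat -> T) (n : nat) (a : T) : nat -> T :=
  fun k => if k == n then a else v k.

Inductive aform (R : realType) :=
| AOne
| ADist of term & term
| APlus of aform R & aform R
| AScale of R & aform R
| ASup of nat & aform R
| AInf of nat & aform R.
Arguments AOne {R}.

Fixpoint aev (R : realType) (T : Type) (o : Lops T) (d : T -> T -> R)
  (f : aform R) (v : nat -> T) : R :=
  match f with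
  | AOne => 1
  | ADist t1 t2 => d (tev o v t1) (tev o v t2)
  | APlus f g => aev o d f v + aev o d g v
  | AScale r f => r * aev o d f v
  | ASup n f => sup [set aev o d f (upd v n a) | a in [set: T]]
  | AInf n f => inf [set aev o d f (upd v n a) | a in [set: T]]
  end.

Fixpoint afv (R : realType) (f : aform R) : seq nat :=
  match f with
  | AOne => [::]
  | ADist t1 t2 => tfv t1 ++ tfv t2
  | APlus f g => afv f ++ afv g
  | AScale _ f => afv f
  | ASup n f | AInf n f => [seq k <- afv f | k != n]
  end.

Definition aclosed (R : realType) (f : aform R) : bool := afv f == [::].

Definition acond (R : realType) := (aform R * aform R)%type.

Definition cond_closed (R : realType) (c : acond R) : bool :=
  aclosed c.1 && aclosed c.2.

Definition cond_holds (R : realType) (T : Type) (o : Lops T) (d : T -> T -> R)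
  (c : acond R) : Prop :=
  forall v : nat -> T, aev o d c.1 v <= aev o d c.2 v.

Definition lip2 (R : realType) (T : Type) (d : T -> T -> R) (f : T -> T -> T) :=
  forall x x' y y', d (f x y) (f x' y') <= Num.max (d x x') (d y y').

Record Lstruct (R : realType) := MkLstruct {
  car : Type;
  ops : Lops car;
  dist : car -> car -> R;
  dist_ge0 : forall x y, 0 <= dist x y;
  dist_le1 : forall x y, dist x y <= 1;
  dist_eq0 : forall x y, dist x y = 0 <-> x = y;
  dist_sym : forall x y, dist x y = dist y x;
  dist_tri : forall x y z, dist x z <= dist x y + dist y z;
  dist_complete : forall u : nat -> car,
    (forall e : R, 0 < e -> exists N : nat, forall m n : nat,
        (N <= m)%N -> (N <= n)%N -> dist (u m) (u n) < e) ->
    exists l : car, forall e : R, 0 < e -> exists N : nat, forall n : nat,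
        (N <= n)%N -> dist (u n) l < e;
  lip_add : lip2 dist (op_add ops);
  lip_mul : lip2 dist (op_mul ops);
  lip_meet : lip2 dist (op_meet ops);
  lip_join : lip2 dist (op_join ops) }.

Inductive foform :=
| FEq of term & term
| FBot
| FImp of foform & foform
| FAll of nat & foform.

Fixpoint fsat (T : Type) (o : Lops T) (p : foform) (v : nat -> T) : Prop :=
  match p with
  | FEq t1 t2 => tev o v t1 = tev o v t2
  | FBot => False
  | FImp p q => fsat o p v -> fsat o q v
  | FAll n p => forall a : T, fsat o p (upd v n a)
  end.

(* N (with operations o) is a model of first-order Peano arithmetic in L:
   the usual axioms for 0, successor x+1, +, ., the full induction schema
   (over all L-formulas, with parameters), and the axioms saying that
   /\ and \/ are min and max for the order  x <= y <-> exists z, x + z = y. *)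
Definition PA_model (T : Type) (o : Lops T) : Prop :=
  let add := op_add o in let mul := op_mul o in
  let z0 := op_zero o in let one := op_one o in
  (forall x, add x one <> z0) /\
      (forall x y, add x one = add y one -> x = y) /\
      (forall x, add x z0 = x) /\
      (forall x y, add x (add y one) = add (add x y) one) /\
      (forall x, mul x z0 = z0) /\
      (forall x y, mul x (add y one) = add (mul x y) x) /\
      (forall x y, (exists z, add x z = y) ->
          op_meet o x y = x /\ op_join o x y = y) /\
      (forall x y, (exists z, add y z = x) ->
          op_meet o x y = y /\ op_join o x y = x) /\
      (forall (p : foform) (n : nat) (v : nat -> T),
          fsat o p (upd v n z0) ->
          (forall a, fsat o p (upd v n a) -> fsat o p (upd v n (add a one))) ->
          forall a, fsat o p (upd v n a)).

Definition discrete_dist (R : realType) (T : Type) (d : T -> T -> R) : Prop :=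
  forall x y, (x = y -> d x y = 0) /\ (x <> y -> d x y = 1).

Definition AA (R : realType) (c : acond R) : Prop :=
  cond_closed c /\
  forall (N : Type) (o : Lops N) (d : N -> N -> R),
    PA_model o -> discrete_dist d -> cond_holds o d c.

Definition modelAA (R : realType) (M : Lstruct R) : Prop :=
  forall c : acond R, AA c -> cond_holds (ops M) (@dist R M) c.

Definition Mle (R : realType) (M : Lstruct R) (x y : car M) : Prop :=
  op_meet (ops M) x y = x.
Definition Mlt (R : realType) (M : Lstruct R) (x y : car M) : Prop :=
  Mle x y /\ x <> y.

(* assignment for phi(x, y_1..y_m): variable 0 := x, variable i+1 := b i;
   the remaining variables get an irrelevant default value *)
Definition tenv (R : realType) (M : Lstruct R) (m : nat) (x : car M)
  (b : 'I_m -> car M) : nat -> car M :=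
  fun k => match k with
           | 0 => x
           | k'.+1 => match @insub nat (fun j => (j < m)%N) 'I_m k' with
                      | Some i => b i
                      | None => op_zero (ops M)
                      end
           end.

(* assignment for psi(x_1..x_m, y, p_0, p_1, ...):
   variable i < m := b i, variable m := y, variable m+1+j := parameter p j *)
Definition denv (R : realType) (M : Lstruct R) (m : nat) (b : 'I_m -> car M)
  (y : car M) (p : nat -> car M) : nat -> car M :=
  fun k => match @insub nat (fun j => (j < m)%N) 'I_m k with
           | Some i => b i
           | None => if k == m then y else p (k - m.+1)%N
           end.

(* f : M^m -> M is definable: (b, y) |-> d(f b, y) is a uniform limit on
   M^(m+1) of interpretations of affine formulas with parameters in M *)
Definition definable (R : realType) (M : Lstruct R) (m : nat)
  (f : ('I_m -> car M) -> car M) : Prop :=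
  forall e : R, 0 < e ->
    exists (psi : aform R) (p : nat -> car M),
      forall (b : 'I_m -> car M) (y : car M),
        `| dist (f b) y - aev (ops M) (@dist R M) psi (denv b y p) | <= e.

From HB Require Import structures.
From mathcomp Require Import all_boot all_order all_algebra.
From mathcomp Require Import boolp classical_sets reals.
From mathcomp Require Import lra zify.
Import Order.TTheory GRing.Theory Num.Theory.
Local Open Scope ring_scope.
Local Open Scope classical_set_scope.
Set Implicit Arguments. Unset Strict Implicit. Unset Printing Implicit Defensive.

(* In a model of PA with the discrete metric an affine formula takes only
   finitely many values, computable from its syntax, so "x maximises phi(., b)"
   is first-order and the least number principle yields a least maximiser f(b).
   An affine formula chi(b, y) evaluates to d(y, f(b)) in every such model.
   That chi is 1-Lipschitz in each variable, satisfies d(y, y') <= chi(y) +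
   chi(y'), has infimum 0, and vanishes only at a least strict maximiser are
   affine conditions true in all models of PA, hence in M. By completeness
   chi(b, .) is then the distance to a point a of M, which is the unique least
   strict maximiser, and chi with its parameters renamed defines b |-> a. *)

Arguments ADist {R} _ _.

Section SupImage.
Variables (R : realType) (T : Type) (F : T -> R).
Local Notation img := [set F a | a in [set: T]].

Lemma sup_image_ub B : (forall a, F a <= B) -> forall a0, F a0 <= sup img.
Proof.
move=> hB a0; apply: ub_le_sup; last by exists a0.
by exists B => _ [a _ <-].
Qed.

Lemma sup_image_le (t0 : T) c : (forall a, F a <= c) -> sup img <= c.
Proof.
move=> hc; apply: ge_sup; first by exists (F t0), t0.
by move=> _ [a _ <-].
Qed.

Lemma inf_image_lb B : (forall a, B <= F a) -> forall a0, inf img <= F a0.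
Proof.
move=> hB a0; apply: ge_inf; last by exists a0.
by exists B => _ [a _ <-].
Qed.

Lemma inf_image_ge (t0 : T) c : (forall a, c <= F a) -> c <= inf img.
Proof.
move=> hc; apply: lb_le_inf; first by exists (F t0), t0.
by move=> _ [a _ <-].
Qed.

Lemma inf_image_adherent B (t0 : T) eps : (forall a, B <= F a) -> 0 < eps ->
  exists a, F a < inf img + eps.
Proof.
move=> hB he; have [] := @inf_adherent R img eps he.
  split; first by exists (F t0), t0.
  by exists B => _ [a _ <-].
by move=> _ [a _ <-] h; exists a.
Qed.

Lemma sup_image_eq (t0 : T) c : (forall a, F a <= c) -> (exists a, F a = c) ->
  sup img = c.
Proof.
move=> h [a ha]; apply/le_anti; rewrite (sup_image_le t0 h) -ha.
exact: sup_image_ub h a.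
Qed.

Lemma inf_image_eq (t0 : T) c : (forall a, c <= F a) -> (exists a, F a = c) ->
  inf img = c.
Proof.
move=> h [a ha]; apply/le_anti; rewrite (inf_image_ge t0 h) andbT -ha.
exact: inf_image_lb h a.
Qed.
End SupImage.

Lemma eq_imageT (R : realType) T (F G : T -> R) : F =1 G ->
  [set F a | a in [set: T]] = [set G a | a in [set: T]].
Proof. by move=> h; congr image; apply: funext. Qed.

Section Update.
Variable T : Type.
Implicit Types (v : nat -> T) (a b : T).

Lemma upd_eq v n a : upd v n a n = a.
Proof. by rewrite /upd eqxx. Qed.

Lemma upd_neq v n k a : k != n -> upd v n a k = v k.
Proof. by rewrite /upd => /negbTE ->. Qed.

Lemma upd_upd v n a b : upd (upd v n a) n b = upd v n b.
Proof. by apply: funext => k; rewrite /upd; case: eqP. Qed.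

Lemma upd_id v n : upd v n (v n) = v.
Proof. by apply: funext => k; rewrite /upd; case: eqP => // ->. Qed.

Lemma updC v n k a b : n != k -> upd (upd v n a) k b = upd (upd v k b) n a.
Proof.
move=> nk; apply: funext => j; rewrite /upd; case: eqP => // ->.
by rewrite eq_sym (negbTE nk).
Qed.
End Update.

Lemma tev_eq_fv T (o : Lops T) (v w : nat -> T) t :
  {in tfv t, v =1 w} -> tev o v t = tev o w t.
Proof.
elim: t => [n|||a iha b ihb|a iha b ihb|a iha b ihb|a iha b ihb] //= h;
  try (by apply: h; rewrite inE);
  by rewrite iha ?ihb // => k hk; apply: h; rewrite mem_cat hk ?orbT.
Qed.

Section AffineEval.
Variables (R : realType) (T : Type) (o : Lops T) (d : T -> T -> R).
Local Notation ev := (aev o d).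

Lemma aev_eq_fv f (v w : nat -> T) : {in afv f, v =1 w} -> ev f v = ev f w.
Proof.
elim: f v w => [|t1 t2|f ihf g ihg|r f ihf|n f ihf|n f ihf] v w //= h.
- by rewrite !(@tev_eq_fv _ _ v w) // => k hk; apply: h; rewrite mem_cat hk ?orbT.
- by rewrite (ihf v w) ?(ihg v w) // => k hk; apply: h; rewrite mem_cat hk ?orbT.
- by rewrite (ihf v w).
- congr sup; apply: eq_imageT => a; apply: ihf => k hk.
  by rewrite /upd; case: eqP => // /eqP kn; apply: h; rewrite mem_filter kn.
- congr inf; apply: eq_imageT => a; apply: ihf => k hk.
  by rewrite /upd; case: eqP => // /eqP kn; apply: h; rewrite mem_filter kn.
Qed.

Lemma aev_upd_notin_fv f v k a : k \notin afv f -> ev f (upd v k a) = ev f v.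
Proof.
move=> hk; apply: aev_eq_fv => j hj; rewrite /upd; case: eqP => // ejk.
by move: hk; rewrite -ejk hj.
Qed.

Lemma aev_plus f g v : ev (APlus f g) v = ev f v + ev g v. Proof. by []. Qed.
Lemma aev_scale r f v : ev (AScale r f) v = r * ev f v. Proof. by []. Qed.
Lemma aev_dist t1 t2 v : ev (ADist t1 t2) v = d (tev o v t1) (tev o v t2).
Proof. by []. Qed.

Lemma aev_inf n f v : ev (AInf n f) v = inf [set ev f (upd v n a) | a in [set: T]].
Proof. by []. Qed.
Lemma tev_var v k : tev o v (TVar k) = v k. Proof. by []. Qed.
Lemma tev_meet v t1 t2 : tev o v (TMeet t1 t2) = op_meet o (tev o v t1) (tev o v t2).
Proof. by []. Qed.

Definition AMinus (f g : aform R) := APlus f (AScale (-1) g).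

Lemma aev_minus f g v : ev (AMinus f g) v = ev f v - ev g v.
Proof. by rewrite /= mulN1r. Qed.
End AffineEval.

Fixpoint abound (R : realType) (f : aform R) : R :=
  match f with
  | AOne | ADist _ _ => 1
  | APlus f g => abound f + abound g
  | AScale r f => `|r| * abound f
  | ASup _ f | AInf _ f => abound f
  end.

Lemma norm_aev_le_abound (R : realType) T (o : Lops T) (d : T -> T -> R) :
  (forall x y, 0 <= d x y <= 1) -> forall f v, `|aev o d f v| <= abound f.
Proof.
move=> hd; elim => [|t1 t2|f ihf g ihg|r f ihf|n f ihf|n f ihf] v /=.
- by rewrite normr1.
- by case/andP: (hd (tev o v t1) (tev o v t2)) => h0 h1; rewrite ger0_norm.
- by apply: (le_trans (ler_normD _ _)); apply: lerD.
- by rewrite normrM ler_wpM2l.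
- have h a : - abound f <= aev o d f (upd v n a) <= abound f by rewrite -ler_norml.
  rewrite ler_norml; apply/andP; split.
  + apply: le_trans (sup_image_ub (fun a => (andP (h a)).2) (op_zero o)).
    by case/andP: (h (op_zero o)).
  + by apply: (sup_image_le (op_zero o)) => a; case/andP: (h a).
- have h a : - abound f <= aev o d f (upd v n a) <= abound f by rewrite -ler_norml.
  rewrite ler_norml; apply/andP; split.
  + by apply: (inf_image_ge (op_zero o)) => a; case/andP: (h a).
  + apply: le_trans (inf_image_lb (fun a => (andP (h a)).1) (op_zero o)) _.
    by case/andP: (h (op_zero o)).
Qed.

Lemma exists_greatest_in_seq (R : realType) (s : seq R) (P : R -> Prop) :
  (exists x, P x) -> (forall x, P x -> x \in s) ->
  exists x, P x /\ forall y, P y -> y <= x.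
Proof.
elim: s P => [|c s ih] P [x0 Px0] hs; first by move: (hs _ Px0).
have [[x1 [Px1 nx1]]|nP] := pselect (exists x, P x /\ x <> c).
- have h2 x : P x /\ x <> c -> x \in s.
    by case=> Px xc; move: (hs _ Px); rewrite inE; case/orP=> // /eqP /xc.
  have [x [[Px xc] hx]] := ih (fun x => P x /\ x <> c) (ex_intro _ x1 (conj Px1 nx1)) h2.
  have [Pc|nPc] := pselect (P c).
  + exists (Num.max x c); split; first by case: (leP x c).
    move=> y Py; have [->|yc] := pselect (y = c); first by rewrite le_max lexx orbT.
    by rewrite le_max hx.
  + by exists x; split=> // y Py; apply: hx; split=> // yc; apply: nPc; rewrite -yc.
- have Pc : P c.
    by apply: contrapT => nPc; apply: nP; exists x0; split=> // e; apply: nPc; rewrite -e.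
  exists c; split=> // y Py; have [->|yc] := pselect (y = c) => //.
  by exfalso; apply: nP; exists y.
Qed.

Lemma exists_least_in_seq (R : realType) (s : seq R) (P : R -> Prop) :
  (exists x, P x) -> (forall x, P x -> x \in s) ->
  exists x, P x /\ forall y, P y -> x <= y.
Proof.
move=> [x0 Px0] hs.
have hsN x : P (- x) -> x \in map -%R s by move=> Px; rewrite -(opprK x) map_f // hs.
have [|x [Px hx]] := @exists_greatest_in_seq R _ (fun x => P (- x)) _ hsN.
  by exists (- x0); rewrite opprK.
by exists (- x); split=> // y Py; rewrite lerNl; apply: hx; rewrite opprK.
Qed.

Section FiniteValued.
Variables (R : realType) (T : Type) (t0 : T) (F : T -> R) (s : seq R).
Hypothesis F_in_s : forall a, F a \in s.
Local Notation img := [set F a | a in [set: T]].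

Lemma sup_image_attained : exists a, F a = sup img /\ forall a', F a' <= F a.
Proof.
have [_ [[a <-] hx]] :
    exists x, (exists a, F a = x) /\ forall y, (exists a, F a = y) -> y <= x.
  by apply: exists_greatest_in_seq; [exists (F t0), t0|move=> _ [a <-]].
exists a; split; last by move=> a'; apply: hx; exists a'.
by apply/esym/(sup_image_eq t0) => [a'|]; [apply: hx; exists a'|exists a].
Qed.

Lemma inf_image_attained : exists a, F a = inf img /\ forall a', F a <= F a'.
Proof.
have [_ [[a <-] hx]] :
    exists x, (exists a, F a = x) /\ forall y, (exists a, F a = y) -> x <= y.
  by apply: exists_least_in_seq; [exists (F t0), t0|move=> _ [a <-]].
exists a; split; last by move=> a'; apply: hx; exists a'.
by apply/esym/(inf_image_eq t0) => [a'|]; [apply: hx; exists a'|exists a].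
Qed.

Lemma sup_imageP c : sup img = c <-> (exists a, F a = c) /\ forall a, F a <= c.
Proof.
split; last by case=> ex hle; apply: (sup_image_eq t0).
have [a [ha hmax]] := sup_image_attained => <-.
by split; [exists a|move=> a'; rewrite -ha hmax].
Qed.

Lemma inf_imageP c : inf img = c <-> (exists a, F a = c) /\ forall a, c <= F a.
Proof.
split; last by case=> ex hle; apply: (inf_image_eq t0).
have [a [ha hmin]] := inf_image_attained => <-.
by split; [exists a|move=> a'; rewrite -ha hmin].
Qed.
End FiniteValued.

(* Over a discrete metric every distance is 0 or 1, so [avals f] contains all
   possible values of [f]. *)
Fixpoint avals (R : realType) (f : aform R) : seq R :=
  match f with
  | AOne => [:: 1]
  | ADist _ _ => [:: 0; 1]
  | APlus f g => [seq x + y | x <- avals f, y <- avals g]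
  | AScale r f => [seq r * x | x <- avals f]
  | ASup _ f | AInf _ f => avals f
  end.

Section Discrete.
Variables (R : realType) (T : Type) (o : Lops T) (d : T -> T -> R).
Hypothesis hd : discrete_dist d.

Lemma ddist_xx x : d x x = 0. Proof. by case: (hd x x) => h _; apply: h. Qed.

Lemma ddist_neq x y : x <> y -> d x y = 1. Proof. by case: (hd x y) => _; apply. Qed.

Lemma ddist01 x y : 0 <= d x y <= 1.
Proof.
by have [->|ne] := pselect (x = y); rewrite ?ddist_xx ?ddist_neq // ler01 lexx.
Qed.

Lemma ddist_ge0 x y : 0 <= d x y. Proof. by case/andP: (ddist01 x y). Qed.

Lemma ddist_le1 x y : d x y <= 1. Proof. by case/andP: (ddist01 x y). Qed.

Lemma ddistC x y : d x y = d y x.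
Proof.
have [->|ne] := pselect (x = y) => //.
by rewrite !ddist_neq // => e; apply: ne.
Qed.

Lemma ddist_triangle x y z : d x z <= d x y + d y z.
Proof.
have [->|ne] := pselect (x = z); first by rewrite ddist_xx addr_ge0 ?ddist_ge0.
rewrite ddist_neq //; have [exy|nxy] := pselect (x = y).
  by rewrite exy ddist_xx add0r ddist_neq // -exy.
by rewrite ddist_neq // lerDl ddist_ge0.
Qed.

Lemma aev_in_avals f v : aev o d f v \in avals f.
Proof.
elim: f v => [|t1 t2|f ihf g ihg|r f ihf|n f ihf|n f ihf] v /=.
- by rewrite inE.
- have [->|ne] := pselect (tev o v t1 = tev o v t2).
    by rewrite ddist_xx inE eqxx.
  by rewrite ddist_neq // !inE eqxx orbT.
- exact: allpairs_f.
- exact: map_f.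
- by have [a [<- _]] := sup_image_attained (op_zero o) (fun a => ihf (upd v n a)).
- by have [a [<- _]] := inf_image_attained (op_zero o) (fun a => ihf (upd v n a)).
Qed.
End Discrete.

Definition FNot p := FImp p FBot.
Definition FTrue := FImp FBot FBot.
Definition FOr p q := FImp (FNot p) q.
Definition FAnd p q := FNot (FImp p (FNot q)).
Definition FEx n p := FNot (FAll n (FNot p)).
Definition FOrs (l : seq foform) : foform := foldr FOr FBot l.

Section FirstOrderSat.
Variables (T : Type) (o : Lops T).

Lemma fsat_or p q v : fsat o (FOr p q) v <-> fsat o p v \/ fsat o q v.
Proof.
split=> [h|[h|h] //=]; have [hp|hp] := pselect (fsat o p v); by [left|right; apply: h].
Qed.

Lemma fsat_and p q v : fsat o (FAnd p q) v <-> fsat o p v /\ fsat o q v.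
Proof.
split=> [h|[hp hq] h]; last by apply: h.
by split; apply: contrapT => n; apply: h.
Qed.

Lemma fsat_ex n p v : fsat o (FEx n p) v <-> exists a, fsat o p (upd v n a).
Proof.
split=> [h|[a ha] h]; last by apply: (h a).
by apply: contrapT => ne; apply: h => a ha; apply: ne; exists a.
Qed.

Lemma fsat_ors (A : eqType) (F : A -> foform) (l : seq A) v :
  fsat o (FOrs (map F l)) v <-> exists2 x, x \in l & fsat o (F x) v.
Proof.
elim: l => [|x l ih]; first by split=> //= -[].
rewrite [FOrs _]/= fsat_or ih; split.
- case=> [h|[y hy h]]; first by exists x; rewrite ?inE ?eqxx.
  by exists y; rewrite ?inE ?hy ?orbT.
- by case=> y; rewrite inE; case/orP=> [/eqP ->|hy] h; [left|right; exists y].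
Qed.
End FirstOrderSat.

(* [fvalue f c] is a first-order formula that holds exactly when [f] takes the
   value [c] in a discrete structure: quantifiers become finite disjunctions
   over [avals]. *)
Fixpoint fvalue (R : realType) (f : aform R) (c : R) : foform :=
  match f with
  | AOne => if c == 1 then FTrue else FBot
  | ADist t1 t2 =>
      if c == 0 then FEq t1 t2 else if c == 1 then FNot (FEq t1 t2) else FBot
  | APlus f g => FOrs [seq FAnd (fvalue f x) (fvalue g (c - x)) | x <- avals f]
  | AScale r f => FOrs [seq fvalue f x | x <- avals f & r * x == c]
  | ASup n f => FAnd (FEx n (fvalue f c))
                     (FAll n (FOrs [seq fvalue f x | x <- avals f & x <= c]))
  | AInf n f => FAnd (FEx n (fvalue f c))
                     (FAll n (FOrs [seq fvalue f x | x <- avals f & c <= x]))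
  end.

Section FirstOrderValue.
Variables (R : realType) (T : Type) (o : Lops T) (d : T -> T -> R).
Hypothesis hd : discrete_dist d.

Lemma fsat_fvalue f v c : fsat o (fvalue f c) v <-> aev o d f v = c.
Proof.
elim: f v c => [|t1 t2|f ihf g ihg|r f ihf|n f ihf|n f ihf] v c;
  rewrite /fvalue -/fvalue.
- case: (c =P 1) => [->|nc]; first by split=> // _ [].
  by split=> // h; apply: nc.
- rewrite /=; have [e|ne] := pselect (tev o v t1 = tev o v t2).
  + rewrite e (ddist_xx hd); case: (c =P 0) => [->|c0] //.
    case: (c =P 1) => [->|c1]; last by split=> // h; apply: c0.
    by split=> [h|/eqP]; [exfalso; apply: h|rewrite eq_sym oner_eq0].
  + rewrite (ddist_neq hd ne); case: (c =P 0) => [->|c0].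
      by split=> [h|/eqP]; [exfalso; apply: ne|rewrite oner_eq0].
    case: (c =P 1) => [->|c1]; first by split.
    by split=> // h; apply: c1.
- rewrite fsat_ors /=; split.
  + by case=> x _ /fsat_and [/ihf -> /ihg ->]; rewrite addrC subrK.
  + move=> h; exists (aev o d f v); first exact: aev_in_avals.
    by apply/fsat_and; split; [exact/ihf|apply/ihg; rewrite -h addrC addKr].
- rewrite fsat_ors /=; split.
  + by case=> x; rewrite mem_filter => /andP [/eqP <- _] /ihf ->.
  + move=> h; exists (aev o d f v); last exact/ihf.
    by rewrite mem_filter h eqxx aev_in_avals.
- have := sup_imageP (op_zero o) (fun a => aev_in_avals o hd f (upd v n a)).
  rewrite fsat_and fsat_ex /= => ->.
  split; case=> [[a ha] hall]; (split; first by exists a; apply/ihf).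
  + move=> a'; have [x] := (fsat_ors _ _ _ _).1 (hall a').
    by rewrite mem_filter => /andP [hx _] /ihf ->.
  + move=> a'; apply/fsat_ors; exists (aev o d f (upd v n a')); last exact/ihf.
    by rewrite mem_filter hall aev_in_avals.
- have := inf_imageP (op_zero o) (fun a => aev_in_avals o hd f (upd v n a)).
  rewrite fsat_and fsat_ex /= => ->.
  split; case=> [[a ha] hall]; (split; first by exists a; apply/ihf).
  + move=> a'; have [x] := (fsat_ors _ _ _ _).1 (hall a').
    by rewrite mem_filter => /andP [hx _] /ihf ->.
  + move=> a'; apply/fsat_ors; exists (aev o d f (upd v n a')); last exact/ihf.
    by rewrite mem_filter hall aev_in_avals.
Qed.
End FirstOrderValue.

Section PeanoArithmetic.
Variables (T : Type) (o : Lops T).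
Hypothesis hPA : PA_model o.
Local Notation add := (op_add o).
Local Notation z0 := (op_zero o).
Local Notation one := (op_one o).
Local Notation meet := (op_meet o).

Definition pa_le x y := exists z, add x z = y.

Lemma pa_succ_neq0 x : add x one <> z0.
Proof. by case: hPA => h _; apply: h. Qed.

Lemma pa_succ_inj x y : add x one = add y one -> x = y.
Proof. by case: hPA => _ [h _]; apply: h. Qed.

Lemma pa_addx0 x : add x z0 = x.
Proof. by case: hPA => _ [_ [h _]]; apply: h. Qed.

Lemma pa_addxS x y : add x (add y one) = add (add x y) one.
Proof. by case: hPA => _ [_ [_ [h _]]]; apply: h. Qed.

Lemma pa_meet_l x y : pa_le x y -> meet x y = x.
Proof. by case: hPA => _ [_ [_ [_ [_ [_ [h _]]]]]] /h []. Qed.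

Lemma pa_meet_r x y : pa_le y x -> meet x y = y.
Proof. by case: hPA => _ [_ [_ [_ [_ [_ [_ [h _]]]]]]] /h []. Qed.

Lemma pa_ind (P : T -> Prop) p n v : (forall a, fsat o p (upd v n a) <-> P a) ->
  P z0 -> (forall a, P a -> P (add a one)) -> forall a, P a.
Proof.
case: hPA => _ [_ [_ [_ [_ [_ [_ [_ h]]]]]]] hp h0 hS a.
by apply/hp; apply: h => [|b /hp /hS /hp]; first exact/hp.
Qed.

Lemma pa_zero_or_succ z : z = z0 \/ exists w, z = add w one.
Proof.
pose p := FOr (FEq (TVar 0) TZero) (FEx 1 (FEq (TVar 0) (TAdd (TVar 1) TOne))).
apply: (@pa_ind (fun z => z = z0 \/ exists w, z = add w one) p 0 (fun _ => z0))
  => [a||a _]; last by right; exists a.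
- by rewrite fsat_or fsat_ex /= /upd.
- by left.
Qed.

Lemma pa_add0x x : add z0 x = x.
Proof.
pose p := FEq (TAdd TZero (TVar 0)) (TVar 0).
apply: (@pa_ind (fun x => add z0 x = x) p 0 (fun _ => z0)) => [a||a ih] //.
- exact: pa_addx0.
- by rewrite pa_addxS ih.
Qed.

Lemma pa_addSx y w : add (add y one) w = add (add y w) one.
Proof.
pose p := FEq (TAdd (TAdd (TVar 1) TOne) (TVar 0)) (TAdd (TAdd (TVar 1) (TVar 0)) TOne).
apply: (@pa_ind (fun w => add (add y one) w = add (add y w) one) p 0 (fun _ => y)) w
  => [a||a ih] //.
- by rewrite !pa_addx0.
- by rewrite !pa_addxS ih.
Qed.

Lemma pa_le_refl x : pa_le x x. Proof. by exists z0; rewrite pa_addx0. Qed.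

Lemma pa_le0x x : pa_le z0 x. Proof. by exists x; rewrite pa_add0x. Qed.

Lemma pa_le_total x y : pa_le x y \/ pa_le y x.
Proof.
pose le t s := FEx 2 (FEq (TAdd t (TVar 2)) s).
pose p := FOr (le (TVar 1) (TVar 0)) (le (TVar 0) (TVar 1)).
apply: (@pa_ind (fun y => pa_le x y \/ pa_le y x) p 0 (fun _ => x)) y => [a||a ih].
- by rewrite fsat_or !fsat_ex /= /upd.
- by right; apply: pa_le0x.
- case: ih => [[z hz]|[z hz]]; first by left; exists (add z one); rewrite pa_addxS hz.
  case: (pa_zero_or_succ z) => [ez|[w ew]].
  + by left; exists one; rewrite -hz ez pa_addx0.
  + by right; exists w; rewrite -hz ew pa_addxS pa_addSx.
Qed.

Lemma pa_le_anti x y : pa_le x y -> pa_le y x -> x = y.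
Proof. by move=> h1 h2; rewrite -(pa_meet_l h1) (pa_meet_r h2). Qed.

Lemma pa_meetC x y : meet x y = meet y x.
Proof. by case: (pa_le_total x y) => h; rewrite (pa_meet_l h) (pa_meet_r h). Qed.

Lemma pa_meet_idPl x y : meet x y = x <-> pa_le x y.
Proof.
split=> [h|]; last exact: pa_meet_l.
case: (pa_le_total x y) => // h'; rewrite (pa_meet_r h') in h.
by rewrite h; apply: pa_le_refl.
Qed.

Lemma pa_meetKl x y : meet (meet x y) y = meet x y.
Proof.
case: (pa_le_total x y) => h; first by rewrite (pa_meet_l h); apply: pa_meet_l h.
by rewrite (pa_meet_r h); apply: pa_meet_l (pa_le_refl y).
Qed.

Lemma pa_lex0 x : pa_le x z0 -> x = z0.
Proof.
case=> z; case: (pa_zero_or_succ z) => [->|[w ->]]; first by rewrite pa_addx0.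
by rewrite pa_addxS => /pa_succ_neq0.
Qed.

Lemma pa_lexS x n : pa_le x (add n one) -> pa_le x n \/ x = add n one.
Proof.
case=> z; case: (pa_zero_or_succ z) => [->|[w ->]]; first by rewrite pa_addx0; right.
by rewrite pa_addxS => /pa_succ_inj <-; left; exists w.
Qed.

(* The induction runs over the formula "no x <= n satisfies q", in which
   n is variable N and the witness of x <= n is variable Z. *)
Lemma pa_least_number (q : foform) (N Z : nat) (v : nat -> T) :
  N != 0%N -> Z != 0%N -> Z != N ->
  (forall w a, fsat o q (upd w N a) <-> fsat o q w) ->
  (exists x, fsat o q (upd v 0 x)) ->
  exists x, fsat o q (upd v 0 x) /\ forall y, fsat o q (upd v 0 y) -> pa_le x y.
Proof.
move=> N0 Z0 ZN hN [x0 hx0]; apply: contrapT => hno.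
pose le_N := FEx Z (FEq (TAdd (TVar 0) (TVar Z)) (TVar N)).
pose S := FAll 0 (FImp le_N (FNot q)).
have hq n x : fsat o q (upd (upd v N n) 0 x) <-> fsat o q (upd v 0 x).
  by rewrite updC // hN.
have hle n x : fsat o le_N (upd (upd v N n) 0 x) <-> pa_le x n.
  rewrite fsat_ex /= /upd !eqxx (eq_sym 0%N Z) (eq_sym N Z).
  by rewrite (negbTE Z0) (negbTE ZN) (negbTE N0).
have hS n : fsat o S (upd v N n) <-> forall x, pa_le x n -> ~ fsat o q (upd v 0 x).
  split=> h x; first by move=> /(hle n x) hx /(hq n x); apply: h.
  by move=> /(hle n x) hx /(hq n x); apply: h.
have hall : forall n x, pa_le x n -> ~ fsat o q (upd v 0 x).
  apply: (@pa_ind _ S N v hS) => [x /pa_lex0 -> hq0|n ih x].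
  - by apply: hno; exists z0; split=> // y _; apply: pa_le0x.
  - case/pa_lexS => [/ih //|-> hqn]; apply: hno; exists (add n one); split=> // y hy.
    case: (pa_le_total (add n one) y) => // /pa_lexS [/ih //|->].
    exact: pa_le_refl.
exact: (hall x0 x0 (pa_le_refl x0) hx0).
Qed.
End PeanoArithmetic.

Section Weights.
Variables (R : realType) (phi : aform R).

Definition vbound : R := foldr (fun x acc => Num.max `|x| acc) 0 (avals phi).

Definition value_gaps : seq R :=
  [seq z <- [seq `|x - y| | x <- avals phi, y <- avals phi] | 0 < z].

Definition vgap : R := foldr Num.min 1 value_gaps.

Definition gap_weight : R := vgap^-1 + 1.
Definition subst_weight : R := 2 * vbound + 1.
Definition cond_weight : R := (2 * vbound + vgap + 1) * gap_weight.

Lemma vbound_ge0 : 0 <= vbound.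
Proof. by rewrite /vbound; elim: (avals phi) => //= x s ih; rewrite le_max ih orbT. Qed.

Lemma norm_le_vbound x : x \in avals phi -> `|x| <= vbound.
Proof.
rewrite /vbound; elim: (avals phi) => //= y s ih; rewrite inE => /orP [/eqP ->|hx].
- by rewrite le_max lexx.
- by rewrite le_max ih ?orbT.
Qed.

Lemma vgap_gt0 : 0 < vgap.
Proof.
have : all (fun z => 0 < z) value_gaps by apply/allP => z; rewrite mem_filter => /andP [].
by rewrite /vgap; elim: value_gaps => //= z s ih /andP [hz /ih]; rewrite lt_min hz.
Qed.

Lemma vgap_le x y : x \in avals phi -> y \in avals phi -> x < y -> x + vgap <= y.
Proof.
move=> hx hy lxy; rewrite -lerBrDl -[y - x]gtr0_norm ?subr_gt0 // distrC.
have : `|x - y| \in value_gaps.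
  by rewrite mem_filter normr_gt0 subr_eq0 (lt_eqF lxy) /=; apply: allpairs_f.
rewrite /vgap; elim: value_gaps => //= z s ih; rewrite inE => /orP [/eqP ->|h].
- by rewrite ge_min lexx.
- by rewrite ge_min ih ?orbT.
Qed.

Lemma gap_weight_ge1 : 1 <= gap_weight.
Proof. by rewrite lerDr invr_ge0 ltW // vgap_gt0. Qed.

Lemma gap_weight_vgap : 1 <= gap_weight * vgap.
Proof.
by rewrite mulrDl mulVf ?gt_eqF ?vgap_gt0 // mul1r lerDl ltW // vgap_gt0.
Qed.

Lemma subst_weight_gt : 2 * vbound < subst_weight.
Proof. by rewrite ltrDl ltr01. Qed.

Lemma cond_weight_ge : 2 * vbound + vgap + 1 <= cond_weight.
Proof.
have h0 : 0 <= 2 * vbound + vgap + 1.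
  by rewrite !addr_ge0 // ?mulr_ge0 ?vbound_ge0 // ltW // vgap_gt0.
by rewrite -[leLHS]mulr1 ler_wpM2l // gap_weight_ge1.
Qed.

Lemma cond_weight_vgap : 2 * vbound + vgap + 1 <= cond_weight * vgap.
Proof.
have h0 : 0 <= 2 * vbound + vgap + 1.
  by rewrite !addr_ge0 // ?mulr_ge0 ?vbound_ge0 // ltW // vgap_gt0.
by rewrite /cond_weight -mulrA -[leLHS]mulr1 ler_wpM2l // gap_weight_vgap.
Qed.

Lemma cond_weight_ge0 : 0 <= cond_weight.
Proof.
by apply: le_trans cond_weight_ge; rewrite !addr_ge0 ?mulr_ge0 ?vbound_ge0 ?ltW ?vgap_gt0.
Qed.
End Weights.

(* Variable layout: 0 is the maximised variable x, 1..m are the parameters,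
   m+1 is bound inside [chi], m+2 is the argument y of [chi] and m+3 is an
   auxiliary variable of the conditions. *)
Section Formulas.
Variables (R : realType) (m : nat) (phi : aform R).

Definition vX := m.+1.
Definition vY := m.+2.
Definition vA := m.+3.

Definition amax := ASup 0 phi.

(* In a discrete structure both equal phi(t/x), the penalty weight exceeding
   the oscillation of phi; in general they only bound it. *)
Definition phi_at_sup t :=
  ASup 0 (APlus phi (AScale (- subst_weight phi) (ADist (TVar 0) t))).
Definition phi_at_inf t :=
  AInf 0 (APlus phi (AScale (subst_weight phi) (ADist (TVar 0) t))).

(* In a model of PA: 0 at the least maximiser f and at least 1 at any other
   maximiser x, witnessed by z := f since then x /\ f <> x. *)
Definition not_below_max :=
  ASup 0 (APlus (ADist (TMeet (TVar vX) (TVar 0)) (TVar vX))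
                (APlus (AScale (gap_weight phi) phi) (AScale (- gap_weight phi) amax))).

(* In every model of PA, chi(y) is the distance from y to the least maximiser. *)
Definition chi :=
  APlus (AScale (gap_weight phi) amax)
    (AInf vX (APlus (ADist (TVar vY) (TVar vX))
       (APlus (AScale (- gap_weight phi) (phi_at_sup (TVar vX)))
              (AScale (gap_weight phi) not_below_max)))).

(* Conditions, each asserted as [_ <= 0]; write a for x_(m+3). [lip_cond G k]:
   G is 1-Lipschitz in x_k. [triangle_cond G]: d(y, a) <= G(y) + G(a).
   [argmax_cond]: a zero y of chi maximises phi. [below_cond]: if chi(y) = 0
   and x <= y then phi(x) + vgap d(x, y) <= max phi. [meet_cond]: if chi(y) = 0
   and a maximises phi, so does y /\ a. *)
Definition lip_cond (G : aform R) k :=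
  AMinus (AMinus G (AInf k (APlus G (ADist (TVar k) (TVar vA)))))
         (ADist (TVar k) (TVar vA)).

Definition triangle_cond (G : aform R) :=
  AMinus (AMinus (ADist (TVar vY) (TVar vA)) G)
         (AInf vY (APlus G (ADist (TVar vY) (TVar vA)))).

Definition argmax_cond :=
  AMinus (AMinus amax (phi_at_inf (TVar vY))) (AScale (cond_weight phi) chi).

Definition below_cond :=
  AMinus (AMinus (AMinus (APlus phi (AScale (vgap phi) (ADist (TVar 0) (TVar vY)))) amax)
                 (AScale (cond_weight phi) chi))
         (AScale (cond_weight phi) (ADist (TMeet (TVar 0) (TVar vY)) (TVar 0))).

Definition meet_cond :=
  AMinus (AMinus (AMinus amax (phi_at_inf (TMeet (TVar vY) (TVar vA))))
                 (AScale (cond_weight phi) chi))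
         (AScale (cond_weight phi) (AMinus amax (phi_at_sup (TVar vA)))).

Definition meetKl_cond : aform R :=
  ADist (TMeet (TMeet (TVar vY) (TVar vA)) (TVar vA)) (TMeet (TVar vY) (TVar vA)).

Definition meetC_cond : aform R :=
  ADist (TMeet (TVar vY) (TVar vA)) (TMeet (TVar vA) (TVar vY)).
End Formulas.

Arguments amax : simpl never.
Arguments phi_at_sup : simpl never.
Arguments phi_at_inf : simpl never.
Arguments not_below_max : simpl never.
Arguments chi : simpl never.

Lemma afv_chi (R : realType) m (phi : aform R) :
  all (fun k => (k <= m)%N) (afv phi) ->
  forall k, k \in afv (chi m phi) -> (k == vY m) || (0 < k <= m)%N.
Proof.
move=> /allP hphi k; rewrite /chi /amax /phi_at_sup /not_below_max /= /vX /vY.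
have -> : (m.+2 != m.+1) = true by lia.
rewrite eqxx /= !(mem_cat, inE, mem_filter).
by case hk: (k \in afv phi); [move: (hphi k hk)|]; lia.
Qed.

Lemma vX_nonparam m : ~~ (0 < vX m <= m)%N. Proof. rewrite /vX; lia. Qed.
Lemma vY_nonparam m : ~~ (0 < vY m <= m)%N. Proof. rewrite /vY; lia. Qed.
Lemma vA_nonparam m : ~~ (0 < vA m <= m)%N. Proof. rewrite /vA; lia. Qed.
Lemma vXY m : vX m != vY m. Proof. rewrite /vX /vY; lia. Qed.
Lemma vYA m : vY m != vA m. Proof. rewrite /vY /vA; lia. Qed.

Lemma tev_upd_notin_fv T (o : Lops T) v n a t :
  n \notin tfv t -> tev o (upd v n a) t = tev o v t.
Proof.
move=> hn; apply: tev_eq_fv => k hk; rewrite upd_neq //.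
by apply: contraNneq hn => <-.
Qed.

Section Semantics.
Variables (R : realType) (T : Type) (o : Lops T) (d : T -> T -> R).
Hypothesis d01 : forall x y, 0 <= d x y <= 1.
Hypothesis dxx : forall x, d x x = 0.
Let d_ge0 x y : 0 <= d x y. Proof. by case/andP: (d01 x y). Qed.
Variables (m : nat) (phi : aform R).
Hypothesis hphi : all (fun k => (k <= m)%N) (afv phi).

Local Notation ev f v := (aev o d f v).
Local Notation F v t := (ev phi (upd v 0 t)).
Local Notation MX v := (ev (amax phi) v).

Lemma MXE v : MX v = sup [set F v t | t in [set: T]].
Proof. by []. Qed.

Lemma aev_bounds f v : - abound f <= ev f v <= abound f.
Proof. by rewrite -ler_norml norm_aev_le_abound. Qed.

Lemma phi_upd k v a : (m < k)%N -> ev phi (upd v k a) = ev phi v.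
Proof.
move=> hk; apply: aev_upd_notin_fv; apply/negP => /(allP hphi).
by rewrite leqNgt hk.
Qed.

Lemma F_upd k v a t : ~~ (0 < k <= m)%N -> F (upd v k a) t = F v t.
Proof.
have [->|k0 hk] := eqVneq k 0%N; first by rewrite upd_upd.
by rewrite updC // phi_upd //; move: hk; rewrite lt0n k0 -ltnNge.
Qed.

Lemma MX_upd k v a : ~~ (0 < k <= m)%N -> MX (upd v k a) = MX v.
Proof. by move=> hk; rewrite !MXE; congr sup; apply: eq_imageT => t; apply: F_upd. Qed.

Lemma F_le_MX v t : F v t <= MX v.
Proof.
rewrite MXE; apply: (@sup_image_ub _ _ (fun t => F v t) (abound phi)) => a.
by case/andP: (aev_bounds phi (upd v 0 a)).
Qed.

Lemma phi_at_infE t v : 0%N \notin tfv t -> ev (phi_at_inf phi t) v =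
  inf [set F v a + subst_weight phi * d a (tev o v t) | a in [set: T]].
Proof.
move=> ht; rewrite /phi_at_inf /=; congr inf; apply: eq_imageT => a.
by rewrite upd_eq tev_upd_notin_fv.
Qed.

Lemma phi_at_supE t v : 0%N \notin tfv t -> ev (phi_at_sup phi t) v =
  sup [set F v a - subst_weight phi * d a (tev o v t) | a in [set: T]].
Proof.
move=> ht; rewrite /phi_at_sup /=; congr sup; apply: eq_imageT => a.
by rewrite upd_eq tev_upd_notin_fv // mulNr.
Qed.

Lemma subst_weight_ge0 : 0 <= subst_weight phi.
Proof. by rewrite addr_ge0 ?mulr_ge0 ?vbound_ge0. Qed.

Lemma phi_at_inf_le t v : 0%N \notin tfv t ->
  ev (phi_at_inf phi t) v <= F v (tev o v t).
Proof.
move=> ht; rewrite phi_at_infE //.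
have hb u : - abound phi <= F v u + subst_weight phi * d u (tev o v t).
  rewrite -[leLHS]addr0 lerD ?mulr_ge0 ?subst_weight_ge0 //.
  by case/andP: (aev_bounds phi (upd v 0 u)).
by apply: le_trans (inf_image_lb hb (tev o v t)) _; rewrite dxx mulr0 addr0.
Qed.

Lemma phi_at_sup_ge t v : 0%N \notin tfv t ->
  F v (tev o v t) <= ev (phi_at_sup phi t) v.
Proof.
move=> ht; rewrite phi_at_supE //.
have hb u : F v u - subst_weight phi * d u (tev o v t) <= abound phi.
  rewrite -[leRHS]addr0 lerD ?oppr_le0 ?mulr_ge0 ?subst_weight_ge0 //.
  by case/andP: (aev_bounds phi (upd v 0 u)).
by apply: le_trans _ (sup_image_ub hb (tev o v t)); rewrite dxx mulr0 subr0.
Qed.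

Section Conditions.
Variable G : aform R.
Hypothesis G_lb : forall v, 0 <= ev G v.
Hypothesis vA_fresh : vA m \notin afv G.

Lemma lip_of_lip_cond k : k != vA m -> (forall w, ev (lip_cond m G k) w <= 0) ->
  forall v a, ev G v <= ev G (upd v k a) + d (v k) a.
Proof.
move=> hk hlip v a; have := hlip (upd v (vA m) a).
rewrite !aev_minus /= upd_eq upd_neq // aev_upd_notin_fv //.
set S := [set _ | _ in _]; suff : inf S <= ev G (upd v k a) by lra.
have hb c : 0 <= ev (APlus G (ADist (TVar k) (TVar (vA m)))) (upd (upd v (vA m) a) k c).
  by rewrite /= addr_ge0 ?G_lb ?d_ge0.
apply: le_trans (inf_image_lb hb a) _.
rewrite /= upd_eq upd_neq 1?eq_sym // upd_eq dxx addr0 updC 1?eq_sym //.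
by rewrite aev_upd_notin_fv.
Qed.

Lemma triangle_of_triangle_cond :
  (forall w, ev (triangle_cond m G) w <= 0) ->
  forall v y y', d y y' <= ev G (upd v (vY m) y) + ev G (upd v (vY m) y').
Proof.
have hYA := vYA m.
move=> htri v y y'; have := htri (upd (upd v (vY m) y) (vA m) y').
rewrite !aev_minus /= upd_eq upd_neq // upd_eq aev_upd_notin_fv //.
set S := [set _ | _ in _]; suff : inf S <= ev G (upd v (vY m) y') by lra.
have hb c : 0 <= ev (APlus G (ADist (TVar (vY m)) (TVar (vA m))))
                    (upd (upd (upd v (vY m) y) (vA m) y') (vY m) c).
  by rewrite /= addr_ge0 ?G_lb ?d_ge0.
apply: le_trans (inf_image_lb hb y') _.
rewrite /= upd_eq upd_neq 1?eq_sym // upd_eq dxx addr0 updC 1?eq_sym //.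
by rewrite upd_upd aev_upd_notin_fv.
Qed.
End Conditions.
End Semantics.

Section PeanoSemantics.
Variables (R : realType) (T : Type) (o : Lops T) (d : T -> T -> R).
Hypothesis hd : discrete_dist d.
Hypothesis hPA : PA_model o.
Variables (m : nat) (phi : aform R).
Hypothesis hphi : all (fun k => (k <= m)%N) (afv phi).

Local Notation ev f v := (aev o d f v).
Local Notation F v t := (ev phi (upd v 0 t)).
Local Notation MX v := (ev (amax phi) v).
Local Notation meet := (op_meet o).
Local Notation K := (gap_weight phi).
Let d01 := ddist01 hd.
Let dxx := ddist_xx hd.
Let d_ge0 := ddist_ge0 hd.
Let d_le1 := ddist_le1 hd.

Lemma F_bounds v t : - vbound phi <= F v t <= vbound phi.
Proof. by rewrite -ler_norml norm_le_vbound ?aev_in_avals. Qed.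

Lemma MX_bounds v : - vbound phi <= MX v <= vbound phi.
Proof. by rewrite -ler_norml norm_le_vbound // (aev_in_avals o hd (amax phi)). Qed.

Lemma MX_attained v : exists t, F v t = MX v.
Proof.
have [t [ht _]] := sup_image_attained (op_zero o) (fun t => aev_in_avals o hd phi (upd v 0 t)).
by exists t.
Qed.

Lemma F_gap v t : F v t <> MX v -> F v t + vgap phi <= MX v.
Proof.
move=> ne; apply: vgap_le; rewrite ?aev_in_avals ?(aev_in_avals o hd (amax phi)) //.
by rewrite lt_neqAle (F_le_MX o d01) andbT; apply/eqP.
Qed.

Definition least_max v f := F v f = MX v /\ forall z, F v z = MX v -> pa_le o f z.

Definition is_max_formula :=
  FOrs [seq FAnd (fvalue phi c) (fvalue (amax phi) c) | c <- avals phi].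

Lemma fsat_is_max_formula w : fsat o is_max_formula w <-> ev phi w = MX w.
Proof.
rewrite fsat_ors; split.
- by case=> c _ /fsat_and [/(fsat_fvalue o hd) -> /(fsat_fvalue o hd) ->].
- move=> h; exists (ev phi w); first exact: aev_in_avals.
  by apply/fsat_and; split; apply/(fsat_fvalue o hd).
Qed.

Lemma least_max_exists v : exists f, least_max v f.
Proof.
have hq x : fsat o is_max_formula (upd v 0 x) <-> F v x = MX v.
  by rewrite fsat_is_max_formula (MX_upd o d hphi).
have hN w a : fsat o is_max_formula (upd w m.+1 a) <-> fsat o is_max_formula w.
  by rewrite !fsat_is_max_formula (phi_upd o d hphi) // (MX_upd o d hphi) ?vX_nonparam.
have hex : exists x, fsat o is_max_formula (upd v 0 x).
  by have [t ht] := MX_attained v; exists t; apply/hq.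
have hZN : m.+2 != m.+1 by rewrite eqSS neq_ltn ltnSn orbT.
have [f [hf1 hf2]] := pa_least_number hPA (N := m.+1) (Z := m.+2) isT isT hZN hN hex.
by exists f; split; [apply/hq|move=> z /hq; apply: hf2].
Qed.

Lemma least_max_upd k v a f : ~~ (0 < k <= m)%N ->
  least_max (upd v k a) f <-> least_max v f.
Proof.
move=> hk; rewrite /least_max (MX_upd o d hphi _ _ hk) (F_upd o d hphi _ _ _ hk).
split; case=> h1 h2; split=> // z.
- by rewrite -(F_upd o d hphi v a z hk); apply: h2.
- by rewrite (F_upd o d hphi v a z hk); apply: h2.
Qed.

Lemma least_max_meet v f z : least_max v f -> F v z = MX v -> meet f z = f.
Proof. by case=> _ h /h; apply: pa_meet_l. Qed.

Lemma least_max_below v f t : least_max v f -> meet t f = t -> t <> f ->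
  F v t + vgap phi <= MX v.
Proof.
move=> [h1 h2] htf ntf; apply: F_gap => ht; apply: ntf.
by apply: (pa_le_anti hPA); [exact/(pa_meet_idPl hPA)|exact: h2].
Qed.

Lemma least_max_not_below v f x : least_max v f -> F v x = MX v -> x <> f ->
  meet x f <> x.
Proof.
move=> [h1 h2] hx nxf /(pa_meet_idPl hPA) hle; apply: nxf.
by apply: (pa_le_anti hPA) => //; apply: h2.
Qed.

Lemma phi_at_sup_eq t v : 0%N \notin tfv t ->
  ev (phi_at_sup phi t) v = F v (tev o v t).
Proof.
move=> ht; apply/le_anti; rewrite (phi_at_sup_ge o d01 dxx) // andbT.
rewrite phi_at_supE //; apply: (sup_image_le (op_zero o)) => a.
have [->|ne] := pselect (a = tev o v t); first by rewrite dxx mulr0 subr0.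
rewrite (ddist_neq hd ne) mulr1.
move: (F_bounds v a) (F_bounds v (tev o v t)) (subst_weight_gt phi).
move=> /andP [? ?] /andP [? ?] ?; lra.
Qed.

Lemma phi_at_inf_eq t v : 0%N \notin tfv t ->
  ev (phi_at_inf phi t) v = F v (tev o v t).
Proof.
move=> ht; apply/le_anti; rewrite (phi_at_inf_le o d01 dxx) // andTb.
rewrite phi_at_infE //; apply: (inf_image_ge (op_zero o)) => a.
have [->|ne] := pselect (a = tev o v t); first by rewrite dxx mulr0 addr0.
rewrite (ddist_neq hd ne) mulr1.
move: (F_bounds v a) (F_bounds v (tev o v t)) (subst_weight_gt phi).
move=> /andP [? ?] /andP [? ?] ?; lra.
Qed.

Definition below_penalty v x :=
  sup [set d (meet x z) x + K * F v z - K * MX v | z in [set: T]].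

Lemma not_below_maxE v : ev (not_below_max m phi) v = below_penalty v (v (vX m)).
Proof.
rewrite /not_below_max /below_penalty /=; congr sup; apply: eq_imageT => z /=.
by rewrite upd_eq upd_neq // -!(MXE o d) (MX_upd o d hphi) // mulNr addrA.
Qed.

Lemma below_penalty_upd k v a x : ~~ (0 < k <= m)%N ->
  below_penalty (upd v k a) x = below_penalty v x.
Proof.
move=> hk; congr sup; apply: eq_imageT => z.
by rewrite (F_upd o d hphi _ _ _ hk) (MX_upd o d hphi _ _ hk).
Qed.

Lemma below_penalty_term_le1 v x z : d (meet x z) x + K * F v z - K * MX v <= 1.
Proof.
have : K * F v z <= K * MX v.
  by rewrite ler_wpM2l ?(F_le_MX o d01) // (le_trans ler01) ?gap_weight_ge1.
by have := d_le1 (meet x z) x; lra.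
Qed.

Lemma below_penalty_ge v x z : d (meet x z) x + K * F v z - K * MX v <= below_penalty v x.
Proof. exact: (sup_image_ub (below_penalty_term_le1 v x)). Qed.

Lemma below_penalty_least v f : least_max v f -> below_penalty v f = 0.
Proof.
move=> hf; apply: (sup_image_eq (op_zero o)); last first.
  by exists f; case: (hf) => h1 _; rewrite h1 (least_max_meet hf h1) dxx; lra.
move=> z; have [hz|hz] := pselect (F v z = MX v).
  by rewrite (least_max_meet hf hz) dxx hz; lra.
have : K * vgap phi <= K * (MX v - F v z).
  by rewrite ler_wpM2l ?(le_trans ler01) ?gap_weight_ge1 // lerBrDl; apply: F_gap.
by have := gap_weight_vgap phi; have := d_le1 (meet f z) f; lra.
Qed.

Lemma below_penalty_ge0 v f x : least_max v f -> 0 <= below_penalty v x.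
Proof.
move=> hf; apply: le_trans (below_penalty_ge v x f); case: (hf) => -> _.
by have := d_ge0 (meet x f) x; lra.
Qed.

Lemma below_penalty_other_max v f x : least_max v f -> F v x = MX v -> x <> f ->
  1 <= below_penalty v x.
Proof.
move=> hf hx nxf; apply: le_trans (below_penalty_ge v x f); case: (hf) => -> _.
by rewrite (ddist_neq hd (least_max_not_below hf hx nxf)); lra.
Qed.

(* The infimum defining chi is attained at the least maximiser f: at any other
   maximiser the penalty below_penalty is at least 1, and at a non-maximiser the loss in
   phi, scaled by K, is at least 1. *)
Lemma chiE v f : least_max v f -> ev (chi m phi) v = d (v (vY m)) f.
Proof.
move=> hf; rewrite /chi aev_plus aev_scale aev_inf.
rewrite (_ : [set _ | _ in _] =
  [set d (v (vY m)) x - K * F v x + K * below_penalty v x | x in [set: T]]); last first.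
  apply: eq_imageT => x; rewrite !aev_plus aev_dist !aev_scale !tev_var.
  rewrite upd_eq upd_neq 1?eq_sym ?vXY // phi_at_sup_eq // tev_var upd_eq.
  rewrite not_below_maxE upd_eq (F_upd o d hphi) ?vX_nonparam //.
  by rewrite below_penalty_upd ?vX_nonparam // mulNr addrA.
have hK1 := gap_weight_ge1 phi; have hKg := gap_weight_vgap phi.
rewrite (@inf_image_eq _ _ _ (op_zero o) (d (v (vY m)) f - K * MX v)).
- by rewrite addrC subrK.
- move=> x; have := d_le1 (v (vY m)) f; have := d_ge0 (v (vY m)) x.
  have := below_penalty_ge0 x hf; move=> h1 h2 h3.
  have [hx|hx] := pselect (F v x = MX v).
  + have [->|nxf] := pselect (x = f).
      by case: (hf) => hfm _; rewrite below_penalty_least // hfm; lra.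
    have : K * 1 <= K * below_penalty v x.
      by rewrite ler_wpM2l ?(below_penalty_other_max hf) //; lra.
    by rewrite hx; lra.
  + have : K * vgap phi <= K * (MX v - F v x).
      by apply: ler_wpM2l; [lra|rewrite lerBrDl; apply: F_gap].
    have : 0 <= K * below_penalty v x by apply: mulr_ge0 => //; lra.
    by rewrite mulrBr; lra.
- by exists f; case: (hf) => -> _; rewrite below_penalty_least // mulr0 addr0.
Qed.

Lemma chi01 v : 0 <= ev (chi m phi) v <= 1.
Proof. by have [f hf] := least_max_exists v; rewrite (chiE hf) d01. Qed.

Lemma lip_cond_le0 (G : aform R) k v : k != vA m -> (forall w, 0 <= ev G w <= 1) ->
  ev (lip_cond m G k) v <= 0.
Proof.
move=> hk hG; rewrite /lip_cond !aev_minus aev_inf aev_dist !tev_var.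
rewrite (_ : [set _ | _ in _] = [set ev G (upd v k a) + d a (v (vA m)) | a in [set: T]]);
  last by apply: eq_imageT => a; rewrite aev_plus aev_dist !tev_var upd_eq upd_neq // eq_sym.
have [g0 g1] := andP (hG v).
have hinf : 0 <= inf [set ev G (upd v k a) + d a (v (vA m)) | a in [set: T]].
  by apply: (inf_image_ge (op_zero o)) => a; rewrite addr_ge0 //; case/andP: (hG (upd v k a)).
have [e|ne] := pselect (v k = v (vA m)); last by rewrite (ddist_neq hd ne); lra.
rewrite e dxx subr0 subr_le0; apply: (inf_image_ge (op_zero o)) => a.
have [->|na] := pselect (a = v (vA m)); first by rewrite -e upd_id dxx addr0.
by rewrite (ddist_neq hd na); case/andP: (hG (upd v k a)); lra.
Qed.

Lemma triangle_cond_le0 v : ev (triangle_cond m (chi m phi)) v <= 0.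
Proof.
have [f hf] := least_max_exists v.
have hfY a : least_max (upd v (vY m) a) f by apply/least_max_upd; rewrite ?vY_nonparam.
rewrite /triangle_cond !aev_minus aev_dist !tev_var aev_inf (chiE hf).
rewrite (_ : [set _ | _ in _] = [set d a f + d a (v (vA m)) | a in [set: T]]); last first.
  apply: eq_imageT => a; rewrite aev_plus aev_dist !tev_var upd_eq upd_neq 1?eq_sym ?vYA //.
  by rewrite (chiE (hfY a)) upd_eq.
have : d f (v (vA m)) <= inf [set d a f + d a (v (vA m)) | a in [set: T]].
  by apply: (inf_image_ge (op_zero o)) => a; rewrite (ddistC hd a f) ddist_triangle.
by have := ddist_triangle hd (v (vY m)) f (v (vA m)); lra.
Qed.

Lemma inf_chi_le0 v : ev (AInf (vY m) (chi m phi)) v <= 0.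
Proof.
have [f hf] := least_max_exists v; rewrite aev_inf.
have hfY : least_max (upd v (vY m) f) f by apply/least_max_upd; rewrite ?vY_nonparam.
have h0 a : 0 <= ev (chi m phi) (upd v (vY m) a) by case/andP: (chi01 (upd v (vY m) a)).
by apply: le_trans (inf_image_lb h0 f) _; rewrite (chiE hfY) upd_eq dxx.
Qed.

Lemma argmax_cond_le0 v : ev (argmax_cond m phi) v <= 0.
Proof.
have [f hf] := least_max_exists v.
rewrite /argmax_cond !aev_minus aev_scale (chiE hf) phi_at_inf_eq // tev_var.
have := cond_weight_ge phi; have := vgap_gt0 phi; have := vbound_ge0 phi.
have [->|ne] := pselect (v (vY m) = f); first by case: hf => -> _; rewrite dxx; lra.
rewrite (ddist_neq hd ne) mulr1.
by move: (F_bounds v (v (vY m))) (MX_bounds v) => /andP [? ?] /andP [? ?]; lra.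
Qed.

Lemma below_cond_le0 v : ev (below_cond m phi) v <= 0.
Proof.
have [f hf] := least_max_exists v.
rewrite /below_cond !aev_minus aev_plus !aev_scale !aev_dist !tev_var tev_meet !tev_var.
rewrite (chiE hf) -{1}(upd_id v 0).
have hK := cond_weight_ge phi; have hg := vgap_gt0 phi; have hb := vbound_ge0 phi.
have hK0 := cond_weight_ge0 phi; have hFM := F_le_MX o d01 phi v (v 0%N).
move: (F_bounds v (v 0%N)) (MX_bounds v) => /andP [? ?] /andP [? ?].
have hdm := d_ge0 (meet (v 0%N) (v (vY m))) (v 0%N).
have : 0 <= cond_weight phi * d (meet (v 0%N) (v (vY m))) (v 0%N) by apply: mulr_ge0.
have : vgap phi * d (v 0%N) (v (vY m)) <= vgap phi.
  by rewrite -[leRHS]mulr1 ler_wpM2l ?d_le1 // ltW.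
have [e|ne] := pselect (v (vY m) = f); last by rewrite (ddist_neq hd ne); lra.
rewrite e dxx mulr0.
have [em|nm] := pselect (meet (v 0%N) f = v 0%N); last by rewrite (ddist_neq hd nm); lra.
rewrite em dxx mulr0.
have [et|nt] := pselect (v 0%N = f); first by case: hf => <- _; rewrite et dxx; lra.
by rewrite (ddist_neq hd nt); have := least_max_below hf em nt; lra.
Qed.

Lemma meet_cond_le0 v : ev (meet_cond m phi) v <= 0.
Proof.
have [f hf] := least_max_exists v.
rewrite /meet_cond !aev_minus !aev_scale aev_minus (chiE hf).
rewrite phi_at_inf_eq // phi_at_sup_eq // tev_meet !tev_var.
set a := v (vA m); set y := v (vY m).
have hK := cond_weight_ge phi; have hKg := cond_weight_vgap phi.
have hg := vgap_gt0 phi; have hb := vbound_ge0 phi; have hK0 := cond_weight_ge0 phi.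
have hFM := F_le_MX o d01 phi v a.
move: (F_bounds v (meet y a)) (MX_bounds v) => /andP [? ?] /andP [? ?].
have : 0 <= cond_weight phi * (MX v - F v a) by apply: mulr_ge0 => //; lra.
have [e|ne] := pselect (y = f); last by rewrite (ddist_neq hd ne); lra.
rewrite e dxx mulr0.
have [ha|ha] := pselect (F v a = MX v).
  by rewrite (least_max_meet hf ha); case: (hf) => -> _; rewrite ha; lra.
have : cond_weight phi * vgap phi <= cond_weight phi * (MX v - F v a).
  by apply: ler_wpM2l => //; rewrite lerBrDl; apply: F_gap.
by move: (F_bounds v (meet f a)) => /andP [? ?]; lra.
Qed.

Lemma meetKl_cond_le0 v : ev (meetKl_cond R m) v <= 0.
Proof. by rewrite /meetKl_cond aev_dist !tev_meet !tev_var (pa_meetKl hPA) dxx. Qed.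

Lemma meetC_cond_le0 v : ev (meetC_cond R m) v <= 0.
Proof. by rewrite /meetC_cond aev_dist !tev_meet !tev_var (pa_meetC hPA) dxx. Qed.
End PeanoSemantics.

Definition aclose (R : realType) (G : aform R) := foldr (@ASup R) G (afv G).

Lemma afv_aclose (R : realType) (G : aform R) : afv (aclose G) = [::].
Proof.
have sub L k : k \in afv (foldr (@ASup R) G L) -> (k \in afv G) && (k \notin L).
  elim: L => [->|n L ih] //=; rewrite mem_filter => /andP [kn /ih /andP [h1 h2]].
  by rewrite h1 inE negb_or kn h2.
case E: (afv (aclose G)) => [//|k s].
by have /sub/andP [->] : k \in afv (aclose G) by rewrite E inE eqxx.
Qed.

Section Closure.
Variables (R : realType) (T : Type) (o : Lops T) (d : T -> T -> R) (G : aform R).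

Lemma aev_foldr_sup_le0 L : (forall w, aev o d G w <= 0) ->
  forall v, aev o d (foldr (@ASup R) G L) v <= 0.
Proof.
move=> hG; elim: L => [|n L ih] v //=.
by apply: (sup_image_le (op_zero o)) => a; apply: ih.
Qed.

Lemma aev_le_foldr_sup L : (forall x y, 0 <= d x y <= 1) ->
  forall v, aev o d G v <= aev o d (foldr (@ASup R) G L) v.
Proof.
move=> d01; elim: L => [|n L ih] v //=; apply: le_trans (ih v) _.
set H := foldr (@ASup R) G L.
have hb a : aev o d H (upd v n a) <= abound H by case/andP: (aev_bounds o d01 H (upd v n a)).
by have := sup_image_ub hb (v n); rewrite upd_id.
Qed.
End Closure.

Lemma dist01 (R : realType) (M : Lstruct R) x y : 0 <= @dist R M x y <= 1.
Proof. by rewrite dist_ge0 dist_le1. Qed.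

(* [G <= 0] holding in every model of PA makes [sup_(free vars) G <= 0] a closed
   condition of AA. *)
Lemma transfer_le0 (R : realType) (M : Lstruct R) (hM : modelAA M) (G : aform R) :
  (forall (N : Type) (o : Lops N) (d : N -> N -> R), PA_model o -> discrete_dist d ->
     forall v, aev o d G v <= 0) ->
  forall v, aev (ops M) (@dist R M) G v <= 0.
Proof.
move=> hG v.
have hc : AA (aclose G, AScale 0 AOne).
  split; first by rewrite /cond_closed /aclosed /= afv_aclose.
  move=> N o d hPA hd w /=; rewrite mul0r.
  by apply: aev_foldr_sup_le0 => w'; apply: hG.
have := hM _ hc v; rewrite /= mul0r; apply: le_trans.
exact/aev_le_foldr_sup/dist01.
Qed.

Lemma exists_inv_succ_lt (R : realType) (e : R) : 0 < e ->
  exists N, forall n, (N <= n)%N -> (n.+1%:R : R)^-1 < e.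
Proof.
move=> he; exists (Num.Def.archi_bound e^-1) => n hn.
have he' : 0 <= e^-1 by rewrite invr_ge0 ltW.
rewrite invf_plt ?posrE ?ltr0Sn //; apply: lt_le_trans (archi_boundP he') _.
by rewrite ler_nat (leq_trans hn).
Qed.

Section DistanceFunction.
Variables (R : realType) (M : Lstruct R) (g : car M -> R).
Local Notation dM := (@dist R M).
Hypothesis g_approx0 : forall e, 0 < e -> exists y, g y < e.
Hypothesis g_triangle : forall y y', dM y y' <= g y + g y'.
Hypothesis g_lip : forall y y', g y <= g y' + dM y y'.

Lemma dist_fun_ge0 y : 0 <= g y.
Proof. by have := g_triangle y y; rewrite (dist_eq0 y y).2 //; lra. Qed.

(* The limit of a sequence with g(u n) < 1/(n+1), Cauchy by [g_triangle]. *)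
Lemma dist_fun_zero : exists a, g a <= 0.
Proof.
have hpos n : 0 < (n.+1%:R : R)^-1 by rewrite invr_gt0 ltr0Sn.
have [u hu] := choice (fun n => g_approx0 (hpos n)).
have [a ha] : exists a, forall e, 0 < e ->
    exists N : nat, forall n, (N <= n)%N -> dM (u n) a < e.
  apply: dist_complete => e he; have he2 : 0 < e / 2 by rewrite divr_gt0.
  have [N hN] := exists_inv_succ_lt he2; have ee : e = e / 2 + e / 2 by rewrite -splitr.
  exists N => i j hi hj; apply: le_lt_trans (g_triangle _ _) _.
  move: (hu i) (hu j) (hN i hi) (hN j hj).
  by set x := (i.+1%:R^-1 : R); set y := (j.+1%:R^-1 : R); lra.
exists a; rewrite leNgt; apply/negP => hga.
have he : 0 < g a / 2 by rewrite divr_gt0.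
have ee : g a = g a / 2 + g a / 2 by rewrite -splitr.
have [N1 hN1] := ha _ he; have [N2 hN2] := exists_inv_succ_lt he.
set n := maxn N1 N2; have := hN1 n (leq_maxl _ _); have := hN2 n (leq_maxr _ _).
move: (hu n) (g_lip a (u n)); rewrite dist_sym.
by set x := (n.+1%:R^-1 : R); lra.
Qed.

Lemma dist_fun_rep : exists a, forall y, g y = dM a y.
Proof.
have [a ga] := dist_fun_zero; have ga0 := dist_fun_ge0 a.
exists a => y; apply/le_anti/andP; split.
- by have := g_lip y a; rewrite dist_sym; lra.
- by have := g_triangle a y; lra.
Qed.
End DistanceFunction.

Definition least_argmax (R : realType) (M : Lstruct R) (F : car M -> R) (a : car M) :=
  F a = sup [set F x | x in [set: car M]] /\ forall t, Mlt t a -> F t < F a.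

Section ModelAA.
Variables (R : realType) (M : Lstruct R).
Hypothesis hM : modelAA M.

Local Notation T := (car M).
Local Notation dM := (@dist R M).
Local Notation ev f v := (aev (ops M) (@dist R M) f v).
Local Notation meet := (op_meet (ops M)).
Let d01 := @dist01 R M.
Let dxx x : dM x x = 0 := (dist_eq0 x x).2 erefl.

Lemma AA_meetKl x y : meet (meet x y) y = meet x y.
Proof.
have := transfer_le0 hM (fun N o d hPA hd => meetKl_cond_le0 hd hPA 0)
  (upd (upd (fun _ => x) (vY 0) x) (vA 0) y).
rewrite /meetKl_cond aev_dist !tev_meet !tev_var upd_eq upd_neq ?upd_eq // => h.
by apply/(dist_eq0 _ _).1/le_anti; rewrite h dist_ge0.
Qed.

Lemma AA_meetC x y : meet x y = meet y x.
Proof.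
have := transfer_le0 hM (fun N o d hPA hd => meetC_cond_le0 hd hPA 0)
  (upd (upd (fun _ => x) (vY 0) x) (vA 0) y).
rewrite /meetC_cond aev_dist !tev_meet !tev_var upd_eq upd_neq ?upd_eq // => h.
by apply/(dist_eq0 _ _).1/le_anti; rewrite h dist_ge0.
Qed.

Variables (m : nat) (phi : aform R).
Hypothesis hphi : all (fun k => (k <= m)%N) (afv phi).
Local Notation F v t := (ev phi (upd v 0 t)).
Local Notation MX v := (ev (amax phi) v).
Local Notation chiM := (chi m phi).

Lemma vA_notin_chi : vA m \notin afv chiM.
Proof. by apply/negP => /(afv_chi hphi); rewrite /vY /vA; lia. Qed.

Lemma v0_notin_chi : 0%N \notin afv chiM.
Proof. by apply/negP => /(afv_chi hphi); rewrite /vY; lia. Qed.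

Lemma chi_ge0 v : 0 <= ev chiM v.
Proof.
have := transfer_le0 hM (G := AScale (-1) chiM) _ v; rewrite aev_scale mulN1r oppr_le0.
apply=> N o d hPA hd w; rewrite aev_scale mulN1r oppr_le0.
by case/andP: (chi01 hd hPA hphi w).
Qed.

Lemma chi_lip k v a : k != vA m -> ev chiM v <= ev chiM (upd v k a) + dM (v k) a.
Proof.
move=> hk; apply: (lip_of_lip_cond d01 dxx chi_ge0 vA_notin_chi hk) => w.
apply: (transfer_le0 hM) => N o d hPA hd u; apply: (lip_cond_le0 hd) => // {}u.
exact: (chi01 hd hPA hphi u).
Qed.

Definition chi_at v y := ev chiM (upd v (vY m) y).

Lemma chi_at_lip v y y' : chi_at v y <= chi_at v y' + dM y y'.
Proof. by have := chi_lip (upd v (vY m) y) y' (vYA m); rewrite upd_upd upd_eq. Qed.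

Lemma chi_at_triangle v y y' : dM y y' <= chi_at v y + chi_at v y'.
Proof.
rewrite /chi_at; apply: (triangle_of_triangle_cond d01 dxx chi_ge0 vA_notin_chi) => w.
by apply: (transfer_le0 hM) => N o d hPA hd u; apply: (triangle_cond_le0 hd hPA hphi).
Qed.

Lemma chi_at_approx0 v e : 0 < e -> exists y, chi_at v y < e.
Proof.
move=> he; have := transfer_le0 hM (fun N o d hPA hd => inf_chi_le0 hd hPA hphi) v.
rewrite aev_inf => hinf.
have [y hy] := inf_image_adherent (op_zero (ops M)) (fun y => chi_ge0 (upd v (vY m) y)) he.
by exists y; rewrite /chi_at; lra.
Qed.

Lemma chi_at_rep v : exists a, forall y, chi_at v y = dM a y.
Proof.
exact: dist_fun_rep (chi_at_approx0 v) (chi_at_triangle v) (chi_at_lip v).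
Qed.

Section ZeroOfChi.
Variables (v : nat -> T) (a : T).
Hypothesis chi_a : ev chiM (upd v (vY m) a) = 0.

Lemma chi_zero_max : F v a = MX v.
Proof.
have := transfer_le0 hM (fun N o d hPA hd => argmax_cond_le0 hd hPA hphi) (upd v (vY m) a).
rewrite /argmax_cond !aev_minus aev_scale chi_a mulr0 subr0 (MX_upd _ _ hphi) ?vY_nonparam //.
have := phi_at_inf_le (ops M) d01 dxx phi (t := TVar (vY m)) (upd v (vY m) a) isT.
rewrite tev_var upd_eq (F_upd _ _ hphi) ?vY_nonparam // => hI hM'.
by apply/le_anti; rewrite F_le_MX // andTb; lra.
Qed.

Lemma chi_zero_strict t : Mlt t a -> F v t < F v a.
Proof.
move=> [hle hne]; set w := upd (upd v (vY m) a) 0 t.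
have := transfer_le0 hM (fun N o d hPA hd => below_cond_le0 hd hPA hphi) w.
rewrite /below_cond !aev_minus aev_plus !aev_scale !aev_dist !tev_meet !tev_var.
rewrite /w upd_eq upd_neq // upd_eq hle dxx mulr0.
rewrite (@aev_upd_notin_fv _ _ _ _ chiM) ?v0_notin_chi // chi_a mulr0.
rewrite (F_upd _ _ hphi) ?vY_nonparam // !(MX_upd _ _ hphi) ?vY_nonparam //.
rewrite chi_zero_max => h.
have : 0 < vgap phi * dM t a.
  by rewrite mulr_gt0 ?vgap_gt0 // lt_neqAle dist_ge0 andbT eq_sym; apply/eqP => /dist_eq0.
lra.
Qed.

Lemma chi_zero_meet a' : F v a' = MX v -> MX v <= F v (meet a a').
Proof.
move=> ha'; set w := upd (upd v (vY m) a) (vA m) a'.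
have eF t : F w t = F v t by rewrite /w !(F_upd _ _ hphi) ?vY_nonparam ?vA_nonparam.
have eMX : MX w = MX v by rewrite /w !(MX_upd _ _ hphi) ?vY_nonparam ?vA_nonparam.
have := transfer_le0 hM (fun N o d hPA hd => meet_cond_le0 hd hPA hphi) w.
have echi : ev chiM w = 0 by rewrite /w aev_upd_notin_fv ?vA_notin_chi.
rewrite /meet_cond !aev_minus !aev_scale aev_minus eMX echi mulr0 subr0.
have := phi_at_inf_le (ops M) d01 dxx phi (t := TMeet (TVar (vY m)) (TVar (vA m))) w isT.
have := phi_at_sup_ge (ops M) d01 dxx phi (t := TVar (vA m)) w isT.
rewrite tev_meet !tev_var /w upd_eq upd_neq ?vYA // upd_eq -/w !eF.
have := cond_weight_ge0 phi; set S := aev _ _ (phi_at_sup _ _) _.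
move=> hK hS hI h; have : cond_weight phi * (MX v - S) <= 0.
  by rewrite mulr_ge0_le0 // subr_le0 -ha'.
lra.
Qed.
End ZeroOfChi.

Lemma chi_rep_least_argmax v a : (forall y, chi_at v y = dM a y) ->
  least_argmax (fun t => F v t) a.
Proof.
move=> ha; have chi_a : ev chiM (upd v (vY m) a) = 0 by rewrite -/(chi_at v a) ha dxx.
by split; [apply: chi_zero_max|apply: chi_zero_strict].
Qed.

Lemma least_argmax_unique v a a' : (forall y, chi_at v y = dM a y) ->
  least_argmax (fun t => F v t) a' -> a' = a.
Proof.
move=> ha [hmax' hlt']; have [hmax hlt] := chi_rep_least_argmax ha.
have chi_a : ev chiM (upd v (vY m) a) = 0 by rewrite -/(chi_at v a) ha dxx.
have hmeet := chi_zero_meet chi_a hmax'.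
have ea' : meet a a' = a'.
  apply: contrapT => ne; have := hlt' (meet a a') (conj (AA_meetKl a a') ne).
  by rewrite hmax'; move/lt_le_trans/(_ hmeet); rewrite ltxx.
apply: contrapT => ne; have := hlt a' (conj (etrans (AA_meetC a' a) ea') ne).
by rewrite hmax' hmax ltxx.
Qed.

Lemma exists_unique_least_argmax v : exists! a, least_argmax (fun t => F v t) a.
Proof.
have [a ha] := chi_at_rep v; exists a; split; first exact: chi_rep_least_argmax.
by move=> a' /(least_argmax_unique ha).
Qed.
End ModelAA.

(* [ashift j G] is [G] with each variable [k] in [1..j] replaced by [k - 1],
   expressed through infima of [d(x_k, x_(k-1)) + _]; this is exact because [G]
   is 1-Lipschitz in these variables. *)
Fixpoint ashift (R : realType) (j : nat) (G : aform R) : aform R :=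
  match j with
  | 0 => G
  | j'.+1 => AInf j'.+1 (APlus (ADist (TVar j'.+1) (TVar j')) (ashift j' G))
  end.

Fixpoint shift_env (T : Type) (j : nat) (v : nat -> T) : nat -> T :=
  match j with
  | 0 => v
  | j'.+1 => shift_env j' (upd v j'.+1 (v j'))
  end.

Lemma shift_env_upd T j (v : nat -> T) k a : (j < k)%N ->
  shift_env j (upd v k a) = upd (shift_env j v) k a.
Proof.
elim: j v => [|j ih] v hk //=.
have hjk : j != k by apply/eqP => e; move: hk; rewrite e; lia.
have hjk' : k != j.+1 by apply/eqP => e; move: hk; rewrite e; lia.
by rewrite upd_neq // updC // ih //; lia.
Qed.

Lemma shift_envE T j (v : nat -> T) k :
  shift_env j v k = if (0 < k <= j)%N then v k.-1 else v k.
Proof.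
elim: j v => [|j ih] v /=; first by case: k.
rewrite ih; case hk: (0 < k <= j)%N.
  have -> : (0 < k <= j.+1)%N by lia.
  by rewrite upd_neq //; apply/eqP => e; move: hk e; lia.
have [->|nk] := eqVneq k j.+1; first by rewrite upd_eq /= ltnSn.
have -> : (0 < k <= j.+1)%N = false by move: hk nk => /negbT; lia.
by rewrite upd_neq.
Qed.

Lemma aev_ashift (R : realType) (M : Lstruct R) (G : aform R) j :
  (forall k, (0 < k <= j)%N -> forall w a,
     aev (ops M) (@dist R M) G w
       <= aev (ops M) (@dist R M) G (upd w k a) + @dist R M (w k) a) ->
  forall v, aev (ops M) (@dist R M) (ashift j G) v
              = aev (ops M) (@dist R M) G (shift_env j v).
Proof.
elim: j => [|j ih] hL v //=.
have {}ih := ih (fun k hk => hL k (ltac:(lia))).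
have hj : j != j.+1 by rewrite ltn_eqF.
set W := shift_env j v; rewrite shift_env_upd ?ltnSn // -/W.
apply: (inf_image_eq (op_zero (ops M))) => [a|].
- rewrite ih upd_eq upd_neq // shift_env_upd // -/W.
  by have := hL j.+1 (ltnSn j) (upd W j.+1 (v j)) a; rewrite upd_upd upd_eq dist_sym addrC.
- exists (v j); rewrite ih upd_eq upd_neq // shift_env_upd //.
  by rewrite (dist_eq0 _ _).2 // add0r.
Qed.

Section Definability.
Variables (R : realType) (M : Lstruct R).
Hypothesis hM : modelAA M.
Variables (m : nat) (phi : aform R).
Hypothesis hphi : all (fun k => (k <= m)%N) (afv phi).

Local Notation dM := (@dist R M).
Local Notation ev f v := (aev (ops M) (@dist R M) f v).
Local Notation z0 := (op_zero (ops M)).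

Lemma phi_tenv (b : 'I_m -> car M) :
  (fun t => ev phi (upd (tenv z0 b) 0 t)) = (fun x => ev phi (tenv x b)).
Proof. by apply: funext => t; congr aev; apply: funext => -[|k]. Qed.

Lemma shift_denv_param (b : 'I_m -> car M) y p k : (0 < k <= m)%N ->
  shift_env m (denv b y p) k = tenv z0 b k.
Proof.
rewrite shift_envE => hk; rewrite hk /denv.
case: k hk => [//|k] /= hk; case: insubP => [i _ _|] //.
by rewrite hk.
Qed.

Lemma denv_last (b : 'I_m -> car M) y p : denv b y p m = y.
Proof. by rewrite /denv; case: insubP => [i|_]; rewrite ?ltnn ?eqxx. Qed.

(* inf_y (d(y, x_m) + chi(x_0, ..., x_(m-1), y)), which evaluates to d(f b, x_m)
   under [denv]: [ashift] moves the parameters of chi from 1..m to 0..m-1. *)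
Definition dist_formula :=
  AInf (vY m) (APlus (ADist (TVar (vY m)) (TVar m)) (ashift m (chi m phi))).

Lemma aev_dist_formula (b : 'I_m -> car M) y p a :
  (forall c, chi_at m phi (tenv z0 b) c = dM a c) ->
  ev dist_formula (denv b y p) = dM a y.
Proof.
move=> ha; have hL k : (0 < k <= m)%N -> forall w c,
    ev (chi m phi) w <= ev (chi m phi) (upd w k c) + dM (w k) c.
  by move=> hk w c; apply: (chi_lip hM hphi); apply: contraTneq hk => ->; apply: vA_nonparam.
have hchi c : ev (chi m phi) (upd (shift_env m (denv b y p)) (vY m) c) = dM a c.
  rewrite -ha; apply: aev_eq_fv => k /(afv_chi hphi) /orP [/eqP ->|hk].
    by rewrite !upd_eq.
  have hkY : k != vY m by apply: contraTneq hk => ->; apply: vY_nonparam.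
  by rewrite !upd_neq // shift_denv_param.
rewrite aev_inf; apply: (inf_image_eq z0) => [c|].
- rewrite aev_plus aev_dist !tev_var upd_eq upd_neq; last by rewrite /vY; lia.
  by rewrite (aev_ashift hL) shift_env_upd ?hchi ?denv_last // addrC dist_tri.
- exists y; rewrite aev_plus aev_dist !tev_var upd_eq upd_neq; last by rewrite /vY; lia.
  rewrite (aev_ashift hL) shift_env_upd ?hchi ?denv_last //.
  by rewrite (dist_eq0 y y).2 // add0r.
Qed.

Lemma definable_least_argmax (f : ('I_m -> car M) -> car M) :
  (forall b, least_argmax (fun x => ev phi (tenv x b)) (f b)) -> definable f.
Proof.
move=> hf e he; exists dist_formula, (fun _ => z0) => b y.
have [a ha] := chi_at_rep hM hphi (tenv z0 b).
have -> : f b = a by apply: (least_argmax_unique hM hphi ha); rewrite phi_tenv.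
by rewrite (aev_dist_formula _ _ ha) subrr normr0 ltW.
Qed.
End Definability.

Unset Implicit Arguments.

Theorem mainTheorem3 (R : realType) (M : Lstruct R) (hM : modelAA M)
  (m : nat) (phi : aform R) (hphi : all (fun k => (k <= m)%N) (afv phi)) :
  (forall b : 'I_m -> car M,
     exists! a : car M,
       aev (ops M) (@dist R M) phi (tenv a b)
         = sup [set aev (ops M) (@dist R M) phi (tenv x b) | x in [set: car M]]
       /\ (forall t : car M, Mlt t a ->
             aev (ops M) (@dist R M) phi (tenv t b)
               < aev (ops M) (@dist R M) phi (tenv a b)))
  /\
  (forall f : ('I_m -> car M) -> car M,
     (forall b : 'I_m -> car M,
        aev (ops M) (@dist R M) phi (tenv (f b) b)
          = sup [set aev (ops M) (@dist R M) phi (tenv x b) | x in [set: car M]]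
        /\ (forall t : car M, Mlt t (f b) ->
              aev (ops M) (@dist R M) phi (tenv t b)
                < aev (ops M) (@dist R M) phi (tenv (f b) b))) ->
     definable f).
Proof.
split=> [b|f hf]; last exact: (definable_least_argmax hM hphi hf).
have := exists_unique_least_argmax hM hphi (tenv (op_zero (ops M)) b).
by rewrite phi_tenv.
Qed.
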